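(* Consider the decoupled system \[ \begin{aligned} \frac{dS}{dt}&= B-\beta S(t)\int_{t_0}^{h_1} f_{T_1}(s)e^{-\mu_v s}G(I(t-s))\,ds-\mu S(t)+\alpha\int_{t_0}^{\infty} f_{T_3}(r)I(t-r)e^{-\mu r}\,dr,\\ \frac{dI}{dt}&= \beta\int_{t_0}^{h_2} f_{T_2}(u)S(t-u)\int_{t_0}^{h_1} f_{T_1}(s)e^{-\mu_v s-\mu u}G(I(t-s-u))\,ds\,du-(\mu+d+\alpha)I(t), \end{aligned} \] (the $S$ and $I$ equations of the full SEIRS system with additionally $E'=\beta S\int f_{T_1}(s)e^{-\mu_v s}G(I(t-s))ds-\mu E-\beta\int\!\!\int f_{T_2}(u)f_{T_1}(s)S(t-u)e^{-\mu_v s-\mu u}G(I(t-s-u))dsdu$ and $R'=\alpha I-\mu R-\alpha\int f_{T_3}(r)I(t-r)e^{-\mu r}dr$), with initial data $\varphi_k\in UC_g$, $\varphi_k(t_0)>0$, and with solutions considered in $D^{expl}(\infty)=\{Y\in\mathbb{R}^4_+:\ \frac{B}{\mu+d}\le S+E+I+R\le\frac{B}{\mu}\}$. Let $R_0^*=\frac{\beta}{\mu+d+\alpha}$ and $E(e^{-(\mu_vT_1+\mu T_2)})=\int_{t_0}^{h_2}\int_{t_0}^{h_1}e^{-\mu_v s-\mu u}f_{T_2}(u)f_{T_1}(s)\,ds\,du$, and suppose that either (1) $R_0^*\ge1$ and $E(e^{-(\mu_vT_1+\mu T_2)})<\frac{1}{R_0^*}$, or (2) $R_0^*<1$ (so that,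 in addition, $\lim_{t\to\infty}\frac1t\int_{t_0}^tS(\xi)d\xi=B/\mu$ holds). Then in $D^{expl}(\infty)$ the disease-free equilibrium $E_0=(S_0^*,0)=(B/\mu,0)=(1,0)$ is stable in the sense of Lyapunov.
   Context: Constants: $t_0\ge0$, $h_1,h_2>0$, $B,\beta,\mu,\mu_v,\alpha>0$, $d\ge0$, with $B/\mu=1$. $T_1,T_2,T_3$ are random delays with probability densities $f_{T_1}$ on $[t_0,h_1]$, $f_{T_2}$ on $[t_0,h_2]$, $f_{T_3}$ on $[t_0,\infty)$. $G:[0,\infty)\to[0,\infty)$ satisfies: (A1) $G(0)=0$; (A2) strictly monotonic; (A3) $G\in C^2$, $G''<0$; (A4) $\lim_{I\to\infty}G(I)=C\in[0,\infty)$; (A5) $G(I)\le I$ for $I>0$; (A6) $\left(\frac{G(x)}{x}-\frac{G(y)}{y}\right)(G(x)-G(y))\le0$ for $x,y\ge0$. $UC_g$ is the space of continuous $\varphi:(-\infty,t_0]\to\mathbb{R}_+$ with $\sup_{t\le t_0}|\varphi(t)|/g(t)<\infty$ and $|\varphi|/g$ uniformly continuous, for a continuous non-increasing $g\ge1$ with $g(t_0)=1$, $\lim_{u\to t_0^-}g(t+u)/g(t)=1$ uniformly in $t\ge t_0$, $\lim_{t\to-\infty}g(t)=\infty$. *)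

From mathcomp Require Import all_boot all_order all_algebra.
From mathcomp Require Import all_classical all_reals all_analysis.
Set Implicit Arguments. Unset Strict Implicit. Unset Printing Implicit Defensive.
Import Order.TTheory GRing.Theory Num.Theory.
Import numFieldNormedType.Exports.
Local Open Scope classical_set_scope.
Local Open Scope ring_scope.

Section Defs.
Variable R : realType.

Definition seirs_Lint (A : set R) (f : R -> R) : R :=
  \int[(@lebesgue_measure R)]_(x in A) f x.

Definition seirs_is_density (A : set R) (f : R -> R) : Prop :=
  measurable_fun A f /\ (forall x, A x -> 0 <= f x) /\
  (\int[(@lebesgue_measure R)]_(x in A) (f x)%:E = 1)%E.

Definition seirs_admissible_g (t0 : R) (g : R -> R) : Prop :=
  {within `]-oo, t0], continuous g} /\
  {in `]-oo, t0] &, forall x y, x <= y -> g y <= g x} /\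
  (forall t, t <= t0 -> 1 <= g t) /\
  g t0 = 1 /\
  (forall e, 0 < e -> exists del, 0 < del /\
     forall u, t0 - del < u -> u < t0 ->
       forall t, t0 <= t -> `| g (t + u) / g t - 1 | < e) /\
  g @ -oo --> +oo.

(** phi belongs to UC_g (phi : (-oo, t0] -> R_+, represented on R). *)
Definition seirs_UCg (t0 : R) (g : R -> R) (phi : R -> R) : Prop :=
  {within `]-oo, t0], continuous phi} /\
  (forall t, t <= t0 -> 0 <= phi t) /\
  (exists M, forall t, t <= t0 -> `| phi t | / g t <= M) /\
  (forall e, 0 < e -> exists del, 0 < del /\
     forall x y, x <= t0 -> y <= t0 -> `| x - y | < del ->
       `| `| phi x | / g x - `| phi y | / g y | < e).

Definition seirs_gnorm (t0 : R) (g : R -> R) (phi : R -> R) : R :=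
  sup [set `| phi t | / g t | t in `]-oo, t0]].

Definition seirs_G_assumptions (G : R -> R) : Prop :=
  (forall x, 0 <= x -> 0 <= G x) /\
  G 0 = 0 /\
  ({in `[0, +oo[ &, forall x y, x < y -> G x < G y} \/
            {in `[0, +oo[ &, forall x y, x < y -> G y < G x}) /\
  ({within `[0, +oo[, continuous G} /\
            (forall x, 0 < x -> derivable G x 1 /\ derivable (derive1 G) x 1) /\
            {in `]0, +oo[, continuous (derive1n 2 G)} /\
            (forall x, 0 < x -> derive1n 2 G x < 0)) /\
  (exists C : R, 0 <= C /\ G @ +oo --> C) /\
  (forall x, 0 < x -> G x <= x) /\
  (forall x y, 0 < x -> 0 < y -> (G x / x - G y / y) * (G x - G y) <= 0).

Definition seirs_force_S (t0 h1 muv : R) (f1 G I : R -> R) (t : R) : R :=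
  seirs_Lint `[t0, h1] (fun s => f1 s * expR (- (muv * s)) * G (I (t - s))).

Definition seirs_force_I (t0 h1 h2 mu muv : R) (f1 f2 G S I : R -> R) (t : R) : R :=
  seirs_Lint `[t0, h2] (fun u => f2 u * S (t - u) *
    seirs_Lint `[t0, h1] (fun s => f1 s * expR (- (muv * s) - mu * u) * G (I (t - s - u)))).

Definition seirs_recov_term (t0 mu : R) (f3 I : R -> R) (t : R) : R :=
  seirs_Lint `[t0, +oo[ (fun r => f3 r * I (t - r) * expR (- (mu * r))).

Definition seirs_is_solution (t0 h1 h2 B beta mu muv alpha d : R)
  (g f1 f2 f3 G S E I Rv : R -> R) : Prop :=
  continuous S /\ continuous E /\ continuous I /\ continuous Rv /\
  seirs_UCg t0 g S /\ seirs_UCg t0 g E /\ seirs_UCg t0 g I /\ seirs_UCg t0 g Rv /\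
  0 < S t0 /\ 0 < E t0 /\ 0 < I t0 /\ 0 < Rv t0 /\
  (forall t, t0 <= t ->
     (@lebesgue_measure R).-integrable `[t0, +oo[
        (fun r => (f3 r * I (t - r) * expR (- (mu * r)))%:E)) /\
  (forall t, t0 < t ->
     is_derive t 1 S (B - beta * S t * seirs_force_S t0 h1 muv f1 G I t - mu * S t
                        + alpha * seirs_recov_term t0 mu f3 I t) /\
     is_derive t 1 E (beta * S t * seirs_force_S t0 h1 muv f1 G I t - mu * E t
                        - beta * seirs_force_I t0 h1 h2 mu muv f1 f2 G S I t) /\
     is_derive t 1 I (beta * seirs_force_I t0 h1 h2 mu muv f1 f2 G S I t
                        - (mu + d + alpha) * I t) /\
     is_derive t 1 Rv (alpha * I t - mu * Rv t - alpha * seirs_recov_term t0 mu f3 I t)) /\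
  (forall t, t0 <= t ->
     0 <= S t /\ 0 <= E t /\ 0 <= I t /\ 0 <= Rv t /\
     B / (mu + d) <= S t + E t + I t + Rv t /\ S t + E t + I t + Rv t <= B / mu).

Definition seirs_Eexp (t0 h1 h2 mu muv : R) (f1 f2 : R -> R) : R :=
  seirs_Lint `[t0, h2] (fun u => seirs_Lint `[t0, h1]
    (fun s => expR (- (muv * s) - mu * u) * f2 u * f1 s)).

End Defs.

(** Let [K] and [J] be the Laplace transforms of the delays [T1] and [T2]
    at [muv] and [mu]; then [E(exp(-(muv T1 + mu T2))) = K J], and either hypothesis
    gives [k := beta K J < mu + d + alpha].  Pick [A > 0] with [k (1 + A) < mu + d + alpha]
    and [beta A < mu eps/2].  If the initial data are [A / g(t0 - h1 - h2)]-close to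
    [(1, 0)] in [UC_g], then [|S - 1| < A] and [I < A] on the whole delay window
    [[t0 - h1 - h2, t0]].  At the first time [I] would reach [A], the force of infection
    is at most [(1 + A) A K J], so [I' <= (k (1 + A) - (mu + d + alpha)) A < 0]: hence
    [I < A] forever.  At the first time [S] would fall to [1 - eps/2], the infection term
    is at most [beta A < mu eps/2] while [B - mu S = mu eps/2], so [S' > 0]: hence
    [S > 1 - eps/2] forever.  Finally [S <= 1] since [S + E + I + R <= B/mu = 1]. *)

From mathcomp Require Import all_boot all_order all_algebra.
From mathcomp Require Import all_classical all_reals all_analysis.
From mathcomp Require Import ring lra measurable_realfun.
Set Implicit Arguments. Unset Strict Implicit. Unset Printing Implicit Defensive.
Import Order.TTheory GRing.Theory Num.Theory.
Import numFieldNormedType.Exports.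
Local Open Scope classical_set_scope.
Local Open Scope ring_scope.

Section barrier.
Variable R : realType.
Implicit Types (f : R -> R) (a s x A l : R).

Lemma is_derive_ge0_left_max f a s l : a < s -> is_derive s 1 f l ->
  (forall y, a <= y -> y < s -> f y < f s) -> 0 <= l.
Proof.
move=> lt_as [df dfl] fs_max; rewrite leNgt; apply/negP => l_lt0.
have quot_cvg : (fun h : R => h^-1 *: ((f \o shift s) (h *: 1) - f s)) @ 0^' --> l.
  by rewrite -dfl; exact: df.
have : \forall h \near 0^', h^-1 *: ((f \o shift s) (h *: 1) - f s) < 0.
  exact: cvgr_lt l quot_cvg 0 l_lt0.
rewrite /= near_withinE => /nbhs_ballP[e /= e0 quot_lt0].
pose h := - Num.min e (s - a) / 2.
have m_gt0 : 0 < Num.min e (s - a) by rewrite lt_min e0 subr_gt0.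
have [me ms] : Num.min e (s - a) <= e /\ Num.min e (s - a) <= s - a.
  by split; rewrite ge_min lexx ?orbT.
have h_lt0 : h < 0 by rewrite /h; lra.
have : ball 0 e h by rewrite /ball /= sub0r normrN ltr0_norm //; rewrite /h; lra.
move/quot_lt0/(_ (ltr0_neq0 h_lt0)); rewrite /= scaler1 [h + s]addrC.
rewrite ltNge => /negP; apply; rewrite mulr_le0 // ?invr_le0 ?ltW //.
by rewrite subr_lt0 fs_max /h; lra.
Qed.

Lemma exists_first_hit f a x A : continuous f -> f a < A -> a <= x -> A <= f x ->
  exists s, [/\ a < s, s <= x, f s = A & forall y, a <= y -> y < s -> f y < A].
Proof.
move=> cf fa_lt le_ax A_le.
pose E := [set t | a <= t <= x /\ A <= f t].
have E_x : E x by split => //; rewrite le_ax lexx.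
have E_lb : has_lbound E by exists a => t [/andP[]].
have le_infE : lbound E (inf E) := ge_inf E_lb.
set s := inf E in le_infE *.
have le_as : a <= s by apply: lb_le_inf; [exists x | move=> t [/andP[]]].
have below : forall y, a <= y -> y < s -> f y < A.
  move=> y ay ys; rewrite ltNge; apply/negP => Afy.
  have E_y : E y by split => //; rewrite ay /= (le_trans (ltW ys)) // le_infE.
  by have := le_infE _ E_y; rewrite leNgt ys.
have A_le_fs : A <= f s.
  rewrite leNgt; apply/negP => fs_lt.
  have : \forall y \near s, f y < A by exact: cvgr_lt (f s) (cf s) A fs_lt.
  case/nbhs_ballP => e /= e0 fe_lt.
  have [y Ey ys] := inf_adherent e0 (conj (ex_intro _ x E_x) E_lb).
  have : f y < A by apply: fe_lt; rewrite /ball /= ler0_norm ?subr_le0 ?le_infE //; lra.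
  by case: Ey => _; rewrite leNgt => /negP.
have lt_as : a < s.
  by rewrite lt_neqAle le_as andbT; apply: contraTneq fa_lt => ->; rewrite -leNgt.
exists s; split => //; first exact: le_infE.
apply/eqP; rewrite eq_le A_le_fs andbT leNgt; apply/negP => A_lt.
have : \forall y \near s, A < f y by exact: cvgr_gt (f s) (cf s) A A_lt.
case/nbhs_ballP => e /= e0 fe_gt.
pose m := Num.min e (s - a).
have [m0 me ms] : [/\ 0 < m, m <= e & m <= s - a].
  by split; rewrite ?lt_min ?e0 ?subr_gt0 // ge_min lexx ?orbT.
have : A < f (s - m / 2) by apply: fe_gt; rewrite /ball /= opprB addrC subrK ger0_norm; lra.
by rewrite ltNge ltW // below //; lra.
Qed.

Lemma continuous_upper_barrier f a A : continuous f -> f a < A ->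
  (forall s, a < s -> f s = A -> (forall y, a <= y -> y < s -> f y < A) ->
     exists2 l, is_derive s 1 f l & l < 0) ->
  forall x, a <= x -> f x < A.
Proof.
move=> cf fa_lt hit_decr x le_ax; rewrite ltNge; apply/negP => A_le.
have [s [lt_as _ fsA below]] := exists_first_hit cf fa_lt le_ax A_le.
have [l dfl l_lt0] := hit_decr s lt_as fsA below.
have := is_derive_ge0_left_max lt_as dfl; rewrite fsA => /(_ below).
by rewrite leNgt l_lt0.
Qed.

End barrier.

(* [seirs_laplace `[t0, h] f a] is [E(exp(-a T))] for a delay [T] with density [f]. *)
Definition seirs_laplace (R : realType) (A : set R) (f : R -> R) (a : R) : R :=
  seirs_Lint A (fun x => f x * expR (- (a * x))).

Section integrals.
Variable R : realType.
Local Notation mu := (@lebesgue_measure R).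
Implicit Types (D : set R) (f h w : R -> R).

(* Neither [h] nor [w] need be measurable: the integral of a nonnegative function is
   the supremum of the integrals of the simple functions below it. *)
Lemma ge0_le_integral_lower D h w : (forall x, D x -> 0 <= h x <= w x) ->
  (\int[mu]_(x in D) (h x)%:E <= \int[mu]_(x in D) (w x)%:E)%E.
Proof.
move=> hw.
have h_ge0 x : D x -> (0 <= (h x)%:E)%E by move=> /hw /andP[].
have w_ge0 x : D x -> (0 <= (w x)%:E)%E by move=> /hw /andP[h0 /(le_trans h0)].
rewrite !ge0_integralE //; apply: ereal_sup_le => _ [s /= s_le <-].
exists s => //= x; apply: (le_trans (s_le x)); apply: lee_restrict => y Dy.
by rewrite lee_fin; case/andP: (hw y Dy).
Qed.

Lemma le_Lint D h w : (forall x, D x -> 0 <= h x <= w x) ->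
  mu.-integrable D (EFin \o w) -> seirs_Lint D h <= seirs_Lint D w.
Proof.
move=> hw /integrableP[_ w_fin].
have h_ge0 x : D x -> (0 <= (h x)%:E)%E by move=> /hw /andP[].
have w_ge0 x : D x -> (0 <= (w x)%:E)%E by move=> /hw /andP[h0 /(le_trans h0)].
have w_int_fin : (\int[mu]_(x in D) (w x)%:E < +oo)%E.
  rewrite (le_lt_trans _ w_fin) // le_eqVlt; apply/orP; left; apply/eqP.
  by apply: eq_integral => x /[!inE] Dx; rewrite /= ger0_norm // -lee_fin w_ge0.
have := ge0_le_integral_lower hw.
rewrite /seirs_Lint /Rintegral => le_hw; rewrite fine_le //.
- by rewrite ge0_fin_numE ?(le_lt_trans le_hw) // integral_ge0.
- by rewrite ge0_fin_numE // integral_ge0.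
Qed.

Lemma LintZl D w (C : R) : measurable D -> mu.-integrable D (EFin \o w) ->
  seirs_Lint D (fun x => C * w x) = C * seirs_Lint D w.
Proof. by move=> mD int_w; rewrite /seirs_Lint RintegralZl. Qed.

Lemma Lint_le_scale D w h (C : R) : measurable D ->
  mu.-integrable D (EFin \o w) -> (forall x, D x -> 0 <= h x <= C * w x) ->
  seirs_Lint D h <= C * seirs_Lint D w.
Proof.
move=> mD int_w hCw; rewrite -LintZl //; apply: (@le_Lint D h (fun x => C * w x) hCw).
have := integrableZl (mu := mu) mD C int_w.
by apply: eq_integrable => // x _; rewrite /= EFinM.
Qed.

Lemma Lint_density D f : seirs_is_density D f -> seirs_Lint D f = 1.
Proof. by case=> _ [_ f1]; rewrite /seirs_Lint /Rintegral f1. Qed.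

Lemma integrable_density D f : measurable D -> seirs_is_density D f ->
  mu.-integrable D (EFin \o f).
Proof.
move=> mD [mf [f_ge0 f1]]; apply/integrableP; split; first exact/measurable_EFinP.
rewrite (_ : (\int[mu]_(x in D) _ = 1)%E) ?ltry // -f1.
by apply: eq_integral => x /[!inE] Dx; rewrite /= ger0_norm ?f_ge0.
Qed.

Lemma integrable_density_expR D f (a : R) : measurable D ->
  (forall x, D x -> 0 <= x) -> 0 <= a -> seirs_is_density D f ->
  mu.-integrable D (EFin \o (fun x => f x * expR (- (a * x)))).
Proof.
move=> mD D_ge0 a_ge0 densf; have [mf [f_ge0 _]] := densf.
apply: le_integrable (integrable_density mD densf) => // [|x Dx].
  apply/measurable_EFinP; apply: measurable_funM => //.
  apply: measurable_funTS; apply: continuous_measurable_fun => x.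
  by apply: continuous_comp; [apply: cvgN; apply: cvgMr; exact: cvg_id | exact: continuous_expR].
rewrite /= !ger0_norm ?mulr_ge0 ?expR_ge0 ?f_ge0 //.
by rewrite lee_fin ler_piMr ?f_ge0 // expR_le1 oppr_le0 mulr_ge0 // D_ge0.
Qed.

Lemma seirs_laplace_ge0 D f (a : R) : (forall x, D x -> 0 <= f x) ->
  0 <= seirs_laplace D f a.
Proof. by move=> f_ge0; apply: Rintegral_ge0 => x Dx; rewrite mulr_ge0 ?expR_ge0 ?f_ge0. Qed.

Lemma seirs_laplace_le1 D f (a : R) : measurable D ->
  (forall x, D x -> 0 <= x) -> 0 <= a -> seirs_is_density D f -> seirs_laplace D f a <= 1.
Proof.
move=> mD D_ge0 a_ge0 densf; have [_ [f_ge0 _]] := densf.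
rewrite -(Lint_density densf) -[seirs_Lint D f]mul1r.
apply: Lint_le_scale (integrable_density mD densf) _ => // x Dx.
rewrite mul1r mulr_ge0 ?expR_ge0 ?f_ge0 //.
by rewrite ler_piMr ?f_ge0 // expR_le1 oppr_le0 mulr_ge0 // D_ge0.
Qed.

End integrals.

Definition gbounded (R : realType) (t0 : R) (g phi : R -> R) : Prop :=
  exists M, forall t, t <= t0 -> `|phi t| / g t <= M.

Section gnorm.
Variables (R : realType) (t0 : R) (g : R -> R).
Hypothesis g_ge1 : forall t, t <= t0 -> 1 <= g t.

Lemma gbounded_subr (phi : R -> R) (c : R) :
  gbounded t0 g phi -> gbounded t0 g (fun t => phi t - c).
Proof.
case=> M phiM; exists (M + `|c|) => t le_tt0.
have g_gt0 : 0 < g t by apply: lt_le_trans (g_ge1 le_tt0).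
rewrite ler_pdivrMr // (le_trans (ler_normB _ _)) // mulrDl lerD //.
  by rewrite -ler_pdivrMr // phiM.
by rewrite ler_peMr // g_ge1.
Qed.

Lemma ge_gnorm (phi : R -> R) :
  gbounded t0 g phi ->
  forall t, t <= t0 -> `|phi t| / g t <= seirs_gnorm t0 g phi.
Proof.
case=> M phiM t le_tt0; apply: ub_le_sup.
  by exists M => _ [s /= + <-]; rewrite in_itv /= => /phiM.
by exists t => //=; rewrite in_itv /=.
Qed.

Lemma gnorm_ge0 (phi : R -> R) : gbounded t0 g phi -> 0 <= seirs_gnorm t0 g phi.
Proof.
move=> phiM; apply: le_trans (ge_gnorm phiM (lexx t0)).
by rewrite divr_ge0 // (le_trans _ (g_ge1 (lexx t0))).
Qed.

Hypothesis g_noninc : {in `]-oo, t0] &, forall x y, x <= y -> g y <= g x}.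

Lemma gnorm_lt_window (phi : R -> R) (a A : R) :
  gbounded t0 g phi ->
  seirs_gnorm t0 g phi < A / g a -> forall x, a <= x -> x <= t0 -> `|phi x| < A.
Proof.
move=> phiM small x le_ax le_xt0.
have [gx_gt0 ga_gt0] : 0 < g x /\ 0 < g a.
  by split; apply: lt_le_trans (g_ge1 _); rewrite // (le_trans le_ax).
have gxa : g x <= g a by apply: g_noninc; rewrite ?in_itv //= (le_trans le_ax).
rewrite ltr_pdivlMr // in small.
rewrite -(divfK (lt0r_neq0 gx_gt0) `|phi x|).
apply: le_lt_trans small; apply: ler_pM; rewrite ?divr_ge0 ?ge_gnorm //; exact: ltW.
Qed.

Lemma gnorm_addr_lt_window (phi psi : R -> R) (a A : R) :
  gbounded t0 g phi ->
  gbounded t0 g psi ->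
  seirs_gnorm t0 g phi + seirs_gnorm t0 g psi < A / g a ->
  forall x, a <= x -> x <= t0 -> `|phi x| < A /\ `|psi x| < A.
Proof.
move=> phiM psiM small x le_ax le_xt0; have := gnorm_ge0 phiM; have := gnorm_ge0 psiM.
by split; apply: (gnorm_lt_window _ _ le_ax le_xt0) => //; lra.
Qed.

End gnorm.

Section arithmetic.
Variable R : realType.

Lemma seirs_G_ge0_le (G : R -> R) : seirs_G_assumptions G ->
  forall x : R, 0 <= x -> 0 <= G x <= x.
Proof.
case=> G_ge0 [G0 [_ [_ [_ [G_le _]]]]] x x_ge0; rewrite G_ge0 //=.
by have [->|x_gt0] := eqVneq x 0; [rewrite G0 | rewrite G_le // lt_neqAle eq_sym x_gt0].
Qed.

Lemma rate_lt_of_R0_cases (beta c E : R) : 0 < beta -> 0 < c -> 0 <= E <= 1 ->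
  (1 <= beta / c /\ E < 1 / (beta / c)) \/ beta / c < 1 -> beta * E < c.
Proof.
move=> beta_gt0 c_gt0 /andP[E_ge0 E_le1] [[_]|].
  by rewrite div1r invf_div ltr_pdivlMr // mulrC.
by rewrite ltr_pdivrMr // mul1r; apply: le_lt_trans; rewrite ler_piMr // ltW.
Qed.

Lemma exists_pos_margin (k c b n m : R) : 0 <= k -> k < c -> 0 < b -> 0 < n -> 0 < m ->
  exists A, [/\ 0 < A, k * (1 + A) < c, b * A < n & A <= m].
Proof.
move=> k_ge0 k_lt b_gt0 n_gt0 m_gt0.
pose A := Num.min m (Num.min (n / (2 * b)) ((c - k) / (2 * (k + 1)))).
have [Am An Ac] : [/\ A <= m, A <= n / (2 * b) & A <= (c - k) / (2 * (k + 1))].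
  by split; rewrite !ge_min lexx ?orbT.
have A_gt0 : 0 < A by rewrite !lt_min m_gt0 !divr_gt0 //; lra.
rewrite ler_pdivlMr in An; last lra.
rewrite ler_pdivlMr in Ac; last lra.
by exists A; split => //; nra.
Qed.

End arithmetic.

Lemma itvcc_bounds (R : realType) (a b x : R) : (`[a, b]%classic : set R) x -> a <= x <= b.
Proof. by rewrite /= in_itv. Qed.

Lemma itvcc_ge0 (R : realType) (a b x : R) : 0 <= a -> (`[a, b]%classic : set R) x -> 0 <= x.
Proof. by move=> a_ge0 /itvcc_bounds /andP[ax _]; exact: le_trans ax. Qed.

Lemma seirs_solution_bounds (R : realType) (t0 h1 h2 B beta mu muv alpha d : R)
    (g f1 f2 f3 G S E I Rv : R -> R) : B / mu = 1 ->
  seirs_is_solution t0 h1 h2 B beta mu muv alpha d g f1 f2 f3 G S E I Rv ->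
  [/\ forall x : R, 0 <= S x, forall x : R, 0 <= I x & forall x : R, t0 <= x -> S x <= 1].
Proof.
move=> Bmu [_ [_ [_ [_ [[_ [S_hist _]] [_ [[_ [I_hist _]] [_ [_ [_ [_ [_ [_ [_ box]]]]]]]]]]]]]].
split=> [x|x|x t0x]; last by have [_ [? [? [? [_]]]]] := box x t0x; rewrite Bmu; lra.
- by have [xt0|/ltW t0x] := leP x t0; [exact: S_hist | case: (box x t0x)].
- by have [xt0|/ltW t0x] := leP x t0; [exact: I_hist | have [_ [_ []]] := box x t0x].
Qed.

Section seirs_model.
Variables (R : realType) (t0 h1 h2 beta mu muv : R) (f1 f2 G : R -> R).
Hypotheses (t0_ge0 : 0 <= t0) (h1_ge0 : 0 <= h1) (h2_ge0 : 0 <= h2).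
Hypotheses (beta_gt0 : 0 < beta) (mu_ge0 : 0 <= mu) (muv_ge0 : 0 <= muv).
Hypotheses (dens1 : seirs_is_density `[t0, h1] f1) (dens2 : seirs_is_density `[t0, h2] f2).
Hypothesis G_ge0_le : forall x, 0 <= x -> 0 <= G x <= x.

Local Notation K := (seirs_laplace `[t0, h1] f1 muv).
Local Notation J := (seirs_laplace `[t0, h2] f2 mu).

Let itv_ge0 (h x : R) : `[t0, h]%classic x -> 0 <= x. Proof. exact: itvcc_ge0. Qed.

Let int_K : (@lebesgue_measure R).-integrable `[t0, h1]
  (EFin \o (fun z => f1 z * expR (- (muv * z)))).
Proof. exact: integrable_density_expR (measurable_itv _) (@itv_ge0 h1) muv_ge0 dens1. Qed.

Let int_J : (@lebesgue_measure R).-integrable `[t0, h2]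
  (EFin \o (fun u => f2 u * expR (- (mu * u)))).
Proof. exact: integrable_density_expR (measurable_itv _) (@itv_ge0 h2) mu_ge0 dens2. Qed.

Let K_le1 : K <= 1.
Proof. exact: seirs_laplace_le1 (measurable_itv _) (@itv_ge0 h1) muv_ge0 dens1. Qed.

Let J_le1 : J <= 1.
Proof. exact: seirs_laplace_le1 (measurable_itv _) (@itv_ge0 h2) mu_ge0 dens2. Qed.

Lemma seirs_Eexp_factor : seirs_Eexp t0 h1 h2 mu muv f1 f2 = K * J.
Proof.
rewrite /seirs_laplace -(LintZl _ (measurable_itv _) int_J) /seirs_Eexp /seirs_Lint.
apply: eq_Rintegral => u _; rewrite [RHS]mulrC -(LintZl _ (measurable_itv _) int_K).
by apply: eq_Rintegral => z _; rewrite expRD; ring.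
Qed.

Lemma seirs_Eexp_ge0_le1 : 0 <= seirs_Eexp t0 h1 h2 mu muv f1 f2 <= 1.
Proof.
have [_ [f1_ge0 _]] := dens1; have [_ [f2_ge0 _]] := dens2.
have K_ge0 := seirs_laplace_ge0 muv f1_ge0; have J_ge0 := seirs_laplace_ge0 mu f2_ge0.
by rewrite seirs_Eexp_factor mulr_ge0 //= mulr_ile1.
Qed.

Lemma seirs_force_S_bound (I : R -> R) (s a : R) :
  (forall x : R, s - h1 <= x <= s -> 0 <= I x <= a) ->
  0 <= seirs_force_S t0 h1 muv f1 G I s <= a * K.
Proof.
have [_ [f1_ge0 _]] := dens1.
move=> I_le; set w := fun z => f1 z * expR (- (muv * z)).
have bound (z : R) : `[t0, h1]%classic z -> 0 <= w z * G (I (s - z)) <= a * w z.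
  move=> Dz; have /andP[_ zh1] := itvcc_bounds Dz; have z_ge0 := itv_ge0 Dz.
  have w_ge0 : 0 <= w z by rewrite mulr_ge0 ?expR_ge0 ?f1_ge0.
  have /andP[I_ge0 I_lea] : 0 <= I (s - z) <= a by apply: I_le; apply/andP; split; lra.
  have /andP[G_ge0 G_le] := G_ge0_le I_ge0.
  by rewrite mulr_ge0 //= mulrC ler_wpM2r // (le_trans G_le).
apply/andP; split; first by apply: Rintegral_ge0 => z /bound /andP[].
exact: Lint_le_scale (measurable_itv _) int_K bound.
Qed.

Lemma seirs_force_I_bound (S I : R -> R) (s a b : R) : 0 <= a -> 0 <= b ->
  (forall x : R, s - h1 - h2 <= x <= s -> 0 <= I x <= a) ->
  (forall x : R, s - h2 <= x <= s -> 0 <= S x <= b) ->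
  seirs_force_I t0 h1 h2 mu muv f1 f2 G S I s <= b * a * K * J.
Proof.
have [_ [f1_ge0 _]] := dens1; have [_ [f2_ge0 _]] := dens2.
move=> a_ge0 b_ge0 I_le S_le.
set w1 := fun z => f1 z * expR (- (muv * z)).
set w2 := fun u => f2 u * expR (- (mu * u)).
set inner := fun u => seirs_Lint `[t0, h1]
  (fun z => f1 z * expR (- (muv * z) - mu * u) * G (I (s - z - u))).
have inner_bound (u : R) : `[t0, h2]%classic u -> 0 <= inner u <= a * expR (- (mu * u)) * K.
  move=> Du; have /andP[_ uh2] := itvcc_bounds Du; have u_ge0 := itv_ge0 Du.
  have bound (z : R) : `[t0, h1]%classic z ->
      0 <= f1 z * expR (- (muv * z) - mu * u) * G (I (s - z - u))
        <= a * expR (- (mu * u)) * w1 z.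
    move=> Dz; have /andP[_ zh1] := itvcc_bounds Dz; have z_ge0 := itv_ge0 Dz.
    have /andP[I_ge0 I_lea] : 0 <= I (s - z - u) <= a.
      by apply: I_le; apply/andP; split; lra.
    have /andP[G_ge0 G_le] := G_ge0_le I_ge0; have f1z := f1_ge0 _ Dz.
    rewrite expRD mulr_ge0 ?mulr_ge0 ?expR_ge0 //= /w1.
    rewrite [X in _ <= X](_ : _ = f1 z * expR (- (muv * z)) * expR (- (mu * u)) * a); last by ring.
    by rewrite mulrA ler_wpM2l ?mulr_ge0 ?expR_ge0 // (le_trans G_le).
  apply/andP; split; first by apply: Rintegral_ge0 => z /bound /andP[].
  exact: Lint_le_scale (measurable_itv _) int_K bound.
apply: Lint_le_scale (measurable_itv _) int_J _ => u Du.
have /andP[_ uh2] := itvcc_bounds Du; have u_ge0 := itv_ge0 Du; have f2u := f2_ge0 _ Du.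
have /andP[S_ge0 S_leb] : 0 <= S (s - u) <= b by apply: S_le; apply/andP; split; lra.
have /andP[inner_ge0 inner_le] := inner_bound u Du.
rewrite mulr_ge0 ?mulr_ge0 //= /w2.
rewrite [X in _ <= X](_ : _ = f2 u * b * (a * expR (- (mu * u)) * K)); last by ring.
by rewrite ler_pM ?mulr_ge0 // ler_wpM2l.
Qed.

Lemma seirs_infected_lt (S I : R -> R) (c A : R) :
  0 < A -> beta * (K * J) * (1 + A) < c -> continuous I -> (forall x : R, 0 <= I x) ->
  (forall x : R, t0 - h1 - h2 <= x -> 0 <= S x <= 1 + A) ->
  (forall x : R, t0 - h1 - h2 <= x -> x <= t0 -> I x < A) ->
  (forall s : R, t0 < s ->
     is_derive s 1 I (beta * seirs_force_I t0 h1 h2 mu muv f1 f2 G S I s - c * I s)) ->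
  forall x : R, t0 - h1 - h2 <= x -> I x < A.
Proof.
move=> A_gt0 rate_lt cI I_ge0 S_le I_hist dI.
(* [lra] and [nra] do not see section hypotheses. *)
have h1p := h1_ge0; have h2p := h2_ge0; have betap := beta_gt0.
have I_future : forall x : R, t0 <= x -> I x < A.
  apply: continuous_upper_barrier cI _ _; first by apply: I_hist; lra.
  move=> s t0s IsA below; eexists; first exact: dI.
  have I_win (x : R) : s - h1 - h2 <= x <= s -> 0 <= I x <= A.
    move=> /andP[sx xs]; rewrite I_ge0 /=.
    have [xt0|t0x] := leP x t0; first by apply/ltW/I_hist => //; lra.
    move: xs; rewrite le_eqVlt => /orP[/eqP->|xs]; first by rewrite IsA.
    by apply/ltW/below => //; exact: ltW.
  have S_win (x : R) : s - h2 <= x <= s -> 0 <= S x <= 1 + A.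
    by move=> /andP[sx _]; apply: S_le; lra.
  have := seirs_force_I_bound (ltW A_gt0) _ I_win S_win; rewrite IsA; nra.
move=> x hx; have [xt0|t0x] := leP x t0; last exact/I_future/ltW.
exact: I_hist.
Qed.

Lemma seirs_susceptible_gt (S I f3 : R -> R) (alpha A eta : R) :
  0 <= alpha -> (forall r : R, `[t0, +oo[%classic r -> 0 <= f3 r) -> 0 <= A ->
  beta * A < mu * eta -> continuous S -> (forall x : R, 0 <= I x) ->
  (forall x : R, t0 - h1 - h2 <= x -> I x <= A) ->
  (forall x : R, t0 <= x -> S x <= 1) -> 1 - eta < S t0 ->
  (forall s : R, t0 < s ->
     is_derive s 1 S (mu - beta * S s * seirs_force_S t0 h1 muv f1 G I s - mu * S s
                      + alpha * seirs_recov_term t0 mu f3 I s)) ->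
  forall x : R, t0 <= x -> 1 - eta < S x.
Proof.
move=> alpha_ge0 f3_ge0 A_ge0 rate_lt cS I_ge0 I_le S_le1 S_t0 dS x t0x.
have h2p := h2_ge0.
rewrite -ltrN2; apply: (@continuous_upper_barrier R (- S) t0 (- (1 - eta))) t0x.
- by move=> y; apply: cvgN; exact: cS.
- by rewrite /= ltrN2.
move=> s t0s /eqP; rewrite eqr_opp => /eqP Ss _.
set F := seirs_force_S t0 h1 muv f1 G I s; set Rec := seirs_recov_term t0 mu f3 I s.
exists (- (mu - beta * S s * F - mu * S s + alpha * Rec)); first exact/is_deriveN/dS.
have I_win (y : R) : s - h1 <= y <= s -> 0 <= I y <= A.
  by move=> /andP[sy _]; rewrite I_ge0 I_le //; lra.
have /andP[F_ge0 F_le] := seirs_force_S_bound I_win.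
have Rec_ge0 : 0 <= Rec by apply: Rintegral_ge0 => r Dr; rewrite !mulr_ge0 ?expR_ge0 ?f3_ge0.
have infection_le : beta * S s * F <= beta * A.
  rewrite -mulrA ler_wpM2l ?(ltW beta_gt0) // (le_trans _ (ler_piMr A_ge0 K_le1)) //.
  exact: le_trans (ler_piMl F_ge0 (S_le1 s (ltW t0s))) F_le.
have := mulr_ge0 alpha_ge0 Rec_ge0; rewrite Ss in infection_le *; lra.
Qed.

Lemma seirs_solution_near_dfe (B alpha d A eta : R) (g f3 S E I Rv : R -> R) :
  B / mu = 1 -> 0 <= alpha -> (forall r : R, `[t0, +oo[%classic r -> 0 <= f3 r) ->
  0 < A -> A <= eta -> beta * (K * J) * (1 + A) < mu + d + alpha -> beta * A < mu * eta ->
  seirs_is_solution t0 h1 h2 B beta mu muv alpha d g f1 f2 f3 G S E I Rv ->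
  (forall x : R, t0 - h1 - h2 <= x -> x <= t0 -> `|S x - 1| < A /\ `|I x| < A) ->
  forall t : R, t0 <= t -> 1 - eta < S t <= 1 /\ 0 <= I t < A.
Proof.
move=> Bmu alpha_ge0 f3_ge0 A_gt0 A_eta I_rate S_rate sol hist.
have h1p := h1_ge0; have h2p := h2_ge0.
have B_mu : B = mu.
  have mu_neq0 : mu != 0.
    by apply/eqP => mu0; move: Bmu; rewrite mu0 invr0 mulr0 => /eqP; rewrite eq_sym oner_eq0.
  by rewrite -[B](divfK mu_neq0) Bmu mul1r.
have [S_ge0 I_ge0 S_le1] := seirs_solution_bounds Bmu sol; subst B.
case: sol => [cS [_ [cI [_ [_ [_ [_ [_ [_ [_ [_ [_ [_ [dsys _]]]]]]]]]]]]]].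
have S_win (x : R) : t0 - h1 - h2 <= x -> 0 <= S x <= 1 + A.
  move=> hx; rewrite S_ge0 /=; have [xt0|/ltW t0x] := leP x t0; last by have := S_le1 x t0x; lra.
  by have [+ _] := hist x hx xt0; rewrite ltr_norml; lra.
have I_lt := seirs_infected_lt A_gt0 I_rate cI I_ge0 S_win
  (fun x hx xt0 => ltr_normlW (hist x hx xt0).2) (fun s t0s => (dsys s t0s).2.2.1).
have window_t0 : t0 - h1 - h2 <= t0 by lra.
have S_t0 : 1 - eta < S t0 by have [+ _] := hist t0 window_t0 (lexx t0); rewrite ltr_norml; lra.
have S_gt := seirs_susceptible_gt alpha_ge0 f3_ge0 (ltW A_gt0) S_rate cS I_ge0
  (fun x hx => ltW (I_lt x hx)) S_le1 S_t0 (fun s t0s => (dsys s t0s).1).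
move=> t t0t; rewrite S_gt ?S_le1 ?I_ge0 ?I_lt //; lra.
Qed.

End seirs_model.

Theorem theorem6 (R : realType) (t0 h1 h2 B beta mu muv alpha d : R)
  (g f1 f2 f3 G : R -> R) :
  0 <= t0 -> 0 < h1 -> 0 < h2 -> 0 < B -> 0 < beta -> 0 < mu -> 0 < muv ->
  0 < alpha -> 0 <= d -> B / mu = 1 ->
  seirs_is_density `[t0, h1] f1 -> seirs_is_density `[t0, h2] f2 -> seirs_is_density `[t0, +oo[ f3 ->
  seirs_G_assumptions G -> seirs_admissible_g t0 g ->
  let R0 := beta / (mu + d + alpha) in
  (1 <= R0 /\ seirs_Eexp t0 h1 h2 mu muv f1 f2 < 1 / R0) \/ R0 < 1 ->
  forall eps : R, 0 < eps -> exists del : R, 0 < del /\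
    forall S E I Rv : R -> R,
      seirs_is_solution t0 h1 h2 B beta mu muv alpha d g f1 f2 f3 G S E I Rv ->
      (R0 < 1 ->
         (fun t => t^-1 * seirs_Lint `[t0, t] S) @ +oo --> B / mu) ->
      seirs_gnorm t0 g (fun t => S t - 1) + seirs_gnorm t0 g I < del ->
      forall t, t0 <= t -> `| S t - 1 | + `| I t | < eps.
Proof.
move=> t0_ge0 h1_gt0 h2_gt0 _ beta_gt0 mu_gt0 muv_gt0 alpha_gt0 d_ge0 Bmu dens1 dens2
  [_ [f3_ge0 _]] /seirs_G_ge0_le G_le [_ [g_noninc [g_ge1 _]]] R0 R0_cases eps eps_gt0.
have [h1_ge0 h2_ge0] : 0 <= h1 /\ 0 <= h2 by split; apply: ltW.
have [mu_ge0 muv_ge0] : 0 <= mu /\ 0 <= muv by split; apply: ltW.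
have c_gt0 : 0 < mu + d + alpha by lra.
have E_bounds := seirs_Eexp_ge0_le1 t0_ge0 mu_ge0 muv_ge0 dens1 dens2.
have k_lt := rate_lt_of_R0_cases beta_gt0 c_gt0 E_bounds R0_cases.
have k_ge0 : 0 <= beta * seirs_Eexp t0 h1 h2 mu muv f1 f2.
  by case/andP: E_bounds => E_ge0 _; rewrite mulr_ge0 // ltW.
have eps2_gt0 : 0 < eps / 2 by rewrite divr_gt0.
have [A [A_gt0 A_rate A_S A_eps]] :=
  exists_pos_margin k_ge0 k_lt beta_gt0 (mulr_gt0 mu_gt0 eps2_gt0) eps2_gt0.
rewrite seirs_Eexp_factor // in A_rate.
exists (A / g (t0 - h1 - h2)); split.
  by rewrite divr_gt0 // (lt_le_trans ltr01) // g_ge1 //; lra.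
move=> S E I Rv sol _ small t t0t.
have [_ [_ [_ [_ [[_ [_ [S_bd _]]] [_ [[_ [_ [I_bd _]]] _]]]]]]] := sol.
have hist := gnorm_addr_lt_window g_ge1 g_noninc (gbounded_subr g_ge1 1 S_bd) I_bd small.
have [/andP[S_gt S_le1] /andP[I_ge0 I_lt]] :=
  seirs_solution_near_dfe t0_ge0 h1_ge0 h2_ge0 beta_gt0 mu_ge0 muv_ge0 dens1 dens2 G_le
    Bmu (ltW alpha_gt0) f3_ge0 A_gt0 A_eps A_rate A_S sol hist t0t.
by rewrite ler0_norm ?subr_le0 // ger0_norm //; lra.
Qed.
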